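(* Let $\Omega_n=\dfrac{\pi^{n/2}}{\Gamma\left(\frac n2+1\right)}$ and define \[ \theta(n)=\frac13+\frac{1}{18n}-\frac{31}{810n^2},\qquad \nu(n)=\theta(n)-\frac{139}{9720n^3}. \] Then \[ \frac{1}{\sqrt{\pi(n+\theta(n))}}\left(\frac{2\pi e}{n}\right)^{\frac n2}<\Omega_n \] for every integer $n\ge3$, and \[ \Omega_n<\frac{1}{\sqrt{\pi(n+\nu(n))}}\left(\frac{2\pi e}{n}\right)^{\frac n2} \] for every integer $n\ge1$.
   Context: $\Omega_n$ is the volume of the unit ball in $\mathbb{R}^n$; $\Gamma$ is Euler's gamma function. *)

From Stdlib Require Import Reals.
From Coquelicot Require Import Coquelicot.
Open Scope R_scope.

Definition Gamma (s : R) : R :=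
  RInt_gen (fun t => Rpower t (s - 1) * exp (- t))
           (at_right 0) (Rbar_locally p_infty).

Definition Omega (n : nat) : R :=
  Rpower PI (INR n / 2) / Gamma (INR n / 2 + 1).

Definition theta (n : nat) : R :=
  1/3 + 1 / (18 * INR n) - 31 / (810 * INR n ^ 2).

Definition nu (n : nat) : R :=
  theta n - 139 / (9720 * INR n ^ 3).

Definition vol_bound (c : R) (n : nat) : R :=
  / sqrt (PI * (INR n + c)) * Rpower (2 * PI * exp 1 / INR n) (INR n / 2).

(* Let E_c(n) = ln Omega_n - ln (vol_bound c n).  Since Gamma(x + 1) = x Gamma(x),
   E_c(n + 2) - E_c(n) = - D_c(n) / 2 with D_c(x) = 2 - x L(1 / (x + 1)) - L(v), where
   L(z) = ln ((1 + z) / (1 - z)) and (1 + v) / (1 - v) = (x + 2 + c(x + 2)) / (x + c(x)).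
   Truncating L(z) = 2 (z + z^3/3 + z^5/5 + ...) from above or below reduces the sign of D_c to
   a polynomial inequality: D_theta > 0 for x >= 4 and D_nu < 0 for x >= 1.  Hence E_theta
   decreases and E_nu increases along n, n + 2, n + 4, ...  Wallis' inequalities for the
   integrals of sin^n, together with Gamma(x + 1/2) <= sqrt x Gamma(x), bound E_nu(n) from above
   and E_theta(n) from below by O(1/n); a strictly monotone sequence with such a bound cannot
   cross zero, so E_theta > 0 and E_nu < 0.  The case n = 3 uses E_theta(7) < E_theta(3). *)

From Stdlib Require Import Reals Lra Lia Classical Factorial.
From Coquelicot Require Import Coquelicot.
Open Scope R_scope.

Lemma le_of_derive_nonneg (f df : R -> R) (a b : R) : a <= b ->
  (forall x, a <= x <= b -> is_derive f x (df x)) ->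
  (forall x, a <= x <= b -> 0 <= df x) -> f a <= f b.
Proof.
intros hab hd hp. destruct (Req_dec a b) as [->|hne]; [lra|].
destruct (MVT_cor2 f df a b) as [c [hc1 hc2]]; [lra| |].
- intros c hc. apply is_derive_Reals. now apply hd.
- assert (0 <= df c) by (apply hp; lra). nra.
Qed.

Fixpoint atanh_sum (m : nat) (z : R) : R :=
  match m with O => 0 | S k => atanh_sum k z + z ^ (2 * k + 1) / INR (2 * k + 1) end.

Fixpoint even_pow_sum (m : nat) (z : R) : R :=
  match m with O => 0 | S k => even_pow_sum k z + z ^ (2 * k) end.

Lemma is_derive_atanh_sum m z : is_derive (atanh_sum m) z (even_pow_sum m z).
Proof.
induction m as [|k IH]; simpl.
- apply (is_derive_const 0).
- apply (is_derive_plus (atanh_sum k) (fun z => z ^ (2 * k + 1) / INR (2 * k + 1))); [exact IH|].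
  auto_derive; [trivial|].
  replace (pred (k + (k + 0) + 1)) with (2 * k)%nat by lia.
  replace (k + (k + 0))%nat with (2 * k)%nat by lia.
  field. apply not_0_INR. lia.
Qed.

Lemma even_pow_sum_closed m z : z ^ 2 < 1 ->
  even_pow_sum m z = (1 - z ^ (2 * m)) / (1 - z ^ 2).
Proof.
intros hz. apply (Rmult_eq_reg_l (1 - z ^ 2)); [|lra].
rewrite Rmult_div_assoc, Rmult_div_r by lra.
induction m as [|k IH]; cbn [even_pow_sum].
- simpl. ring.
- replace (2 * S k)%nat with (2 * k + 2)%nat by lia. rewrite pow_add.
  rewrite Rmult_plus_distr_l, IH. ring.
Qed.

Lemma atanh_sum_0 m : atanh_sum m 0 = 0.
Proof.
induction m as [|k IH]; cbn [atanh_sum]; [reflexivity|].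
rewrite IH, pow_i by lia. unfold Rdiv. ring.
Qed.

Definition log_ratio (z : R) : R := ln ((1 + z) / (1 - z)).

Lemma log_ratio_sub z : -1 < z < 1 -> log_ratio z = ln (1 + z) - ln (1 - z).
Proof. intros. unfold log_ratio. rewrite ln_div; lra. Qed.

Lemma is_derive_ln_ratio y : -1 < y < 1 ->
  is_derive (fun y => ln (1 + y) - ln (1 - y)) y (2 / (1 - y ^ 2)).
Proof. intros h. auto_derive; [lra|]. field. split; [|split]; nra. Qed.

Lemma log_ratio_ge_atanh_sum m z : 0 <= z < 1 -> 2 * atanh_sum m z <= log_ratio z.
Proof.
intros hz. rewrite log_ratio_sub by lra.
enough (0 <= ln (1 + z) - ln (1 - z) - 2 * atanh_sum m z) by lra.
replace 0 with (ln (1 + 0) - ln (1 - 0) - 2 * atanh_sum m 0)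
  by (rewrite atanh_sum_0, Rplus_0_r, Rminus_0_r, ln_1; ring).
apply (le_of_derive_nonneg (fun y => ln (1 + y) - ln (1 - y) - 2 * atanh_sum m y)
  (fun y => 2 / (1 - y ^ 2) - 2 * even_pow_sum m y)); [lra| |].
- intros x hx. apply (is_derive_minus (fun y => ln (1 + y) - ln (1 - y))).
  + apply is_derive_ln_ratio; lra.
  + apply (is_derive_scal (atanh_sum m)), is_derive_atanh_sum.
- intros x hx. assert (h1 : 0 < 1 - x ^ 2) by nra.
  assert (0 <= x ^ (2 * m)) by (apply pow_le; lra).
  rewrite even_pow_sum_closed by nra.
  replace (2 / (1 - x ^ 2) - 2 * ((1 - x ^ (2 * m)) / (1 - x ^ 2)))
    with (2 * x ^ (2 * m) / (1 - x ^ 2)) by (field; lra).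
  apply Rle_mult_inv_pos; lra.
Qed.

Lemma log_ratio_le_atanh_sum m z zm : 0 <= z <= zm -> zm < 1 ->
  log_ratio z <= 2 * (atanh_sum m z + z ^ (2 * m + 1) / (INR (2 * m + 1) * (1 - zm ^ 2))).
Proof.
intros hz hzm. rewrite log_ratio_sub by lra.
assert (hzm2 : 0 < 1 - zm ^ 2) by nra.
assert (hn : 0 < INR (2 * m + 1)) by (apply lt_0_INR; lia).
set (tail := fun y => y ^ (2 * m + 1) / (INR (2 * m + 1) * (1 - zm ^ 2))).
enough (0 <= 2 * (atanh_sum m z + tail z) - (ln (1 + z) - ln (1 - z))) by (unfold tail in *; lra).
replace 0 with (2 * (atanh_sum m 0 + tail 0) - (ln (1 + 0) - ln (1 - 0))).
2:{ unfold tail. rewrite atanh_sum_0, Rplus_0_r, Rminus_0_r, ln_1, pow_i by lia. field. lra. }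
apply (le_of_derive_nonneg (fun y => 2 * (atanh_sum m y + tail y) - (ln (1 + y) - ln (1 - y)))
  (fun y => 2 * (even_pow_sum m y + y ^ (2 * m) / (1 - zm ^ 2)) - 2 / (1 - y ^ 2))); [lra| |].
- intros x hx.
  apply (is_derive_minus (fun y => 2 * (atanh_sum m y + tail y))); [|apply is_derive_ln_ratio; lra].
  apply (is_derive_scal (fun y => atanh_sum m y + tail y)).
  apply (is_derive_plus (atanh_sum m) tail); [apply is_derive_atanh_sum|].
  unfold tail. auto_derive; [trivial|].
  replace (pred (m + (m + 0) + 1)) with (2 * m)%nat by lia.
  replace (m + (m + 0) + 1)%nat with (2 * m + 1)%nat by lia. field. lra.
- intros x hx. assert (h1 : 0 < 1 - x ^ 2) by nra.
  assert (0 <= x ^ (2 * m)) by (apply pow_le; lra).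
  rewrite even_pow_sum_closed by nra.
  replace (2 * ((1 - x ^ (2 * m)) / (1 - x ^ 2) + x ^ (2 * m) / (1 - zm ^ 2)) - 2 / (1 - x ^ 2))
    with (2 * x ^ (2 * m) * (zm ^ 2 - x ^ 2) / ((1 - zm ^ 2) * (1 - x ^ 2))) by (field; lra).
  apply Rle_mult_inv_pos; [|nra]. apply Rmult_le_pos; [lra|]. nra.
Qed.

(* [theta n] and [nu n] are [theta_R (INR n)] and [nu_R (INR n)] by conversion. *)
Definition theta_R (y : R) : R := 1/3 + 1 / (18 * y) - 31 / (810 * y ^ 2).

Definition nu_R (y : R) : R := theta_R y - 139 / (9720 * y ^ 3).

Lemma theta_R_bounds y : 1 <= y -> 1/5 <= theta_R y < 1.
Proof.
intros hy. unfold theta_R. set (w := / y).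
assert (hw : 0 < w <= 1).
{ unfold w. split; [apply Rinv_0_lt_compat; lra|].
  rewrite <- Rinv_1. apply Rinv_le_contravar; lra. }
replace (1 / (18 * y)) with (w / 18) by (unfold w; field; lra).
replace (31 / (810 * y ^ 2)) with (31 * w ^ 2 / 810) by (unfold w; field; lra).
split; nra.
Qed.

Lemma nu_R_bounds y : 1 <= y -> 0 < nu_R y <= theta_R y.
Proof.
intros hy. pose proof (theta_R_bounds y hy). unfold nu_R.
assert (h3 : 0 < 139 / (9720 * y ^ 3)) by (apply Rdiv_lt_0_compat; [lra|]; nra).
assert (1 <= y ^ 3) by (rewrite <- (pow1 3); apply pow_incr; lra).
enough (139 / (9720 * y ^ 3) <= 139 / 9720) by lra.
apply Rmult_le_compat_l; [lra|]. apply Rinv_le_contravar; lra.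
Qed.

(* For [v = step_arg c x]: [(1 + v) / (1 - v) = (x + 2 + c (x + 2)) / (x + c x)]. *)
Definition step_arg (c : R -> R) (x : R) : R :=
  (x + 2 + c (x + 2) - (x + c x)) / (x + 2 + c (x + 2) + (x + c x)).

Definition err_step (c : R -> R) (x : R) : R :=
  2 - x * log_ratio (/ (x + 1)) - log_ratio (step_arg c x).

Lemma step_arg_bounds (c : R -> R) x : 0 < x -> 0 < c x < 1 -> 0 < c (x + 2) < 1 ->
  0 <= step_arg c x < 1.
Proof.
intros hx h1 h2. unfold step_arg. split.
- apply Rle_mult_inv_pos; lra.
- apply (Rmult_lt_reg_r (x + 2 + c (x + 2) + (x + c x))); [lra|].
  field_simplify; lra.
Qed.

Lemma step_arg_le_quarter (c : R -> R) x : 4 <= x -> 1/5 <= c x -> 0 < c (x + 2) < 1 ->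
  step_arg c x <= 1/4.
Proof.
intros hx h1 h2. unfold step_arg.
apply (Rmult_le_reg_r (x + 2 + c (x + 2) + (x + c x))); [lra|].
field_simplify; lra.
Qed.

Ltac horner_nonneg := match goal with
 | |- 0 <= ?a + ?t * ?b =>
     apply Rplus_le_le_0_compat; [lra | apply Rmult_le_pos; [lra | horner_nonneg]]
 | |- _ => lra end.

Ltac horner_pos := match goal with
 | |- 0 < ?a + ?t * ?b =>
     apply Rplus_lt_le_0_compat; [lra | apply Rmult_le_pos; [lra | horner_nonneg]]
 | |- _ => lra end.

(* The numerators below, expanded in powers of [x - 4] and [x - 1], have positive coefficients. *)
Lemma theta_certificate x : 4 <= x ->
  let u := / (x + 1) in let v := step_arg theta_R x in
  0 < 2 - x * (2 * (u + u ^ 3 / 3 + u ^ 5 / 5 + u ^ 7 / 7 * (25/24)))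
        - 2 * (v + v ^ 3 / 3 + v ^ 5 / 5 * (16/15)).
Proof.
intros hx u v.
assert (hq : 0 < -100440 + x * (45360 + x * (7166880 + x * (12320100 + x * (6998400
  + x * 1312200))))) by nra.
match goal with |- 0 < ?e => replace e with (
    ((1407607373535377453055380548217183885139456000000/7) + (x - 4) *
    ((10488182345589353922498478104202025855273702400000/7) + (x - 4) *
    ((5000082148265082616199197815891824842466641920000) + (x - 4) *
    ((71571282534090969731088393072945472240154664960000/7) + (x - 4) *
    ((102162091972689755001696077414515073042518233600000/7) + (x - 4) *
    ((109295577187867671955225481767238901060762470400000/7) + (x - 4) *
    ((91596169434410580227436617932978344531584409600000/7) + (x - 4) *
    ((8849185075599130457782606266375671012674828800000) + (x - 4) *
    ((34517719504166012823960633277119392715840076800000/7) + (x - 4) *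
    ((16090097171373016502619453875168403592555545600000/7) + (x - 4) *
    ((6343827157116581825755351197214916884703020800000/7) + (x - 4) *
    ((304661044419619733168235546024701270963919360000) + (x - 4) *
    ((614783048396424206950285772582380567054044672000/7) + (x - 4) *
    ((152545453513389924664616420795002852119869760000/7) + (x - 4) *
    ((4663772640073475104518423599496786532713600000) + (x - 4) *
    ((6028833393483059938768198846204914404006400000/7) + (x - 4) *
    ((959665306815122436969582793183393140813600000/7) + (x - 4) *
    ((131314241186282340926547198719423505696000000/7) + (x - 4) *
    ((15375634537201067492075549132907895656000000/7) + (x - 4) *
    ((1530264154519973466777550924323681696000000/7) + (x - 4) *
    ((128236821087828993850352304482188320000000/7) + (x - 4) *
    ((1275854585925423676753632651477120000000) + (x - 4) *
    ((507605843483594147519344673271360000000/7) + (x - 4) *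
    ((22941413514851594287997917728000000000/7) + (x - 4) *
    ((793098925382630565361734004800000000/7) + (x - 4) *
    ((2814003005140128918383884800000000) + (x - 4) * ((312962390766499665863376000000000/7)
    + (x - 4) * (341335213283415601036800000000)))))))))))))))))))))))))))) / ((x+1)^7 *
    ((-100440) + x * ((45360) + x * ((7166880) + x * ((12320100) + x * ((6998400) + x *
    (1312200))))))^5)) by (unfold u, v, step_arg, theta_R; field; repeat split; nra) end.
apply Rdiv_lt_0_compat; [horner_pos|].
apply Rmult_lt_0_compat; apply pow_lt; lra.
Qed.

Lemma nu_certificate x : 1 <= x ->
  let u := / (x + 1) in let v := step_arg nu_R x in
  2 - x * (2 * (u + u ^ 3 / 3 + u ^ 5 / 5)) - 2 * (v + v ^ 3 / 3 + v ^ 5 / 5) < 0.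
Proof.
intros hx u v.
assert (hq : 0 < -75060 + x * (-313470 + x * (-66015 + x * (14360355 + x * (31807080
  + x * (26316900 + x * (9622800 + x * 1312200))))))) by nra.
match goal with |- ?e < 0 => replace e with (
    - ((1648155618822182673995520404141471040000) + (x - 1) *
    ((33728999674935929734288374458354267760000) + (x - 1) *
    ((332131414411620646468630505503502051700000) + (x - 1) *
    ((2096236595069338611906823011772107342600000) + (x - 1) *
    ((9530390716292563600788399913819282774350000) + (x - 1) *
    ((33257645517487048896225316170674755224315000) + (x - 1) *
    ((92689111286453731676986543736622023036246250) + (x - 1) *
    ((211956691133743366657371460889887292260725000) + (x - 1) *
    ((405472908585317423804018506342380885222037500) + (x - 1) *
    ((658322669171552794435298756222937983615850000) + (x - 1) *
    ((917194623204220595951223796772392634799948750) + (x - 1) *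
    ((1105961038154121338306857124485242397827120000) + (x - 1) *
    ((1161912535811951941172545641185435878597875000) + (x - 1) *
    ((1069121773416331357039683933575237826274575000) + (x - 1) *
    ((865068711338805811397852586841419464074443750) + (x - 1) *
    ((617390594961089715159402368953031315698485000) + (x - 1) *
    ((389487807448806178101414313439381623859437500) + (x - 1) *
    ((217494597320248133551055397356825128152900000) + (x - 1) *
    ((107571603929740006490829505771521012456581250) + (x - 1) *
    ((47119271400779918769892404353007720391950000) + (x - 1) *
    ((18263517717653250770568920016482091068580000) + (x - 1) *
    ((6253788172092102277702597576727393935320000) + (x - 1) *
    ((1887035976564047878422985144445966259600000) + (x - 1) *
    ((499989764974962272101550323600195299600000) + (x - 1) *
    ((115778516648438226753532422044241163200000) + (x - 1) *
    ((23285075653874828582934142704315120000000) + (x - 1) *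
    ((4034449940730602726600275593546468000000) + (x - 1) *
    ((595846210574224011759749330780592000000) + (x - 1) *
    ((73962976528139159186843424930720000000) + (x - 1) *
    ((7570849333690982337329236564800000000) + (x - 1) *
    ((622178387933698669192754209920000000) + (x - 1) *
    ((39461445643344219756063043200000000) + (x - 1) * ((1813093895156229016220563200000000)
    + (x - 1) * ((53701983770419016349235200000000) + (x - 1) *
    (769818707256608825040000000000))))))))))))))))))))))))))))))))))) / ((x+1)^5 *
    ((-75060) + x * ((-313470) + x * ((-66015) + x * ((14360355) + x * ((31807080) + x *
    ((26316900) + x * ((9622800) + x * (1312200))))))))^5))
  by (unfold u, v, step_arg, nu_R, theta_R; field; repeat split; nra) end.
rewrite Rdiv_opp_l. apply Ropp_lt_gt_0_contravar.
apply Rdiv_lt_0_compat; [horner_pos|].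
apply Rmult_lt_0_compat; apply pow_lt; lra.
Qed.

Lemma err_step_theta_pos x : 4 <= x -> 0 < err_step theta_R x.
Proof.
intros hx. pose proof (theta_certificate x hx) as hc. cbv zeta in hc. unfold err_step.
set (u := / (x + 1)) in *. set (v := step_arg theta_R x) in *.
assert (hu : 0 <= u <= 1/5).
{ split; [apply Rlt_le, Rinv_0_lt_compat; lra|].
  apply (Rmult_le_reg_r (x + 1)); [lra|]. unfold u. rewrite Rinv_l; lra. }
assert (hv : 0 <= v <= 1/4).
{ pose proof (theta_R_bounds x ltac:(lra)). pose proof (theta_R_bounds (x + 2) ltac:(lra)).
  split; [apply step_arg_bounds|apply step_arg_le_quarter]; lra. }
assert (hLu : log_ratio u <= 2 * (u + u ^ 3 / 3 + u ^ 5 / 5 + u ^ 7 / 7 * (25/24))).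
{ replace (u + u ^ 3 / 3 + u ^ 5 / 5 + u ^ 7 / 7 * (25/24))
    with (atanh_sum 3 u + u ^ (2 * 3 + 1) / (INR (2 * 3 + 1) * (1 - (1/5) ^ 2)))
    by (simpl; field).
  apply log_ratio_le_atanh_sum; lra. }
assert (hLv : log_ratio v <= 2 * (v + v ^ 3 / 3 + v ^ 5 / 5 * (16/15))).
{ replace (v + v ^ 3 / 3 + v ^ 5 / 5 * (16/15))
    with (atanh_sum 2 v + v ^ (2 * 2 + 1) / (INR (2 * 2 + 1) * (1 - (1/4) ^ 2)))
    by (simpl; field).
  apply log_ratio_le_atanh_sum; lra. }
assert (x * log_ratio u <= x * (2 * (u + u ^ 3 / 3 + u ^ 5 / 5 + u ^ 7 / 7 * (25/24))))
  by (apply Rmult_le_compat_l; lra).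
lra.
Qed.

Lemma err_step_nu_neg x : 1 <= x -> err_step nu_R x < 0.
Proof.
intros hx. pose proof (nu_certificate x hx) as hc. cbv zeta in hc. unfold err_step.
set (u := / (x + 1)) in *. set (v := step_arg nu_R x) in *.
assert (hu : 0 <= u < 1).
{ split; [apply Rlt_le, Rinv_0_lt_compat; lra|].
  apply (Rmult_lt_reg_r (x + 1)); [lra|]. unfold u. rewrite Rinv_l; lra. }
assert (hv : 0 <= v < 1).
{ pose proof (nu_R_bounds x ltac:(lra)). pose proof (nu_R_bounds (x + 2) ltac:(lra)).
  pose proof (theta_R_bounds x ltac:(lra)). pose proof (theta_R_bounds (x + 2) ltac:(lra)).
  apply step_arg_bounds; lra. }
assert (hsum : forall z, atanh_sum 3 z = z + z ^ 3 / 3 + z ^ 5 / 5) by (intros; simpl; field).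
pose proof (log_ratio_ge_atanh_sum 3 u hu) as hLu.
pose proof (log_ratio_ge_atanh_sum 3 v hv) as hLv. rewrite hsum in hLu, hLv.
assert (x * (2 * (u + u ^ 3 / 3 + u ^ 5 / 5)) <= x * log_ratio u)
  by (apply Rmult_le_compat_l; lra).
lra.
Qed.

Lemma err_step_theta_3_5 : 0 < err_step theta_R 3 + err_step theta_R 5.
Proof.
unfold err_step.
replace (/ (3 + 1)) with (1/4) by field. replace (/ (5 + 1)) with (1/6) by field.
replace (step_arg theta_R 3) with (181823/791923) by (unfold step_arg, theta_R; field).
replace (step_arg theta_R 5) with (991047/6292553) by (unfold step_arg, theta_R; field).
pose proof (log_ratio_le_atanh_sum 6 (1/4) (1/4) ltac:(lra) ltac:(lra)) as H1.
pose proof (log_ratio_le_atanh_sum 6 (1/6) (1/4) ltac:(lra) ltac:(lra)) as H2.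
pose proof (log_ratio_le_atanh_sum 6 (181823/791923) (1/4) ltac:(lra) ltac:(lra)) as H3.
pose proof (log_ratio_le_atanh_sum 6 (991047/6292553) (1/4) ltac:(lra) ltac:(lra)) as H4.
simpl in H1, H2, H3, H4.
lra.
Qed.

Lemma exp_le_compat x y : x <= y -> exp x <= exp y.
Proof.
intros h. destruct (Req_dec x y) as [->|hn]; [lra|]. apply Rlt_le, exp_increasing; lra.
Qed.

Lemma filterlim_pinfty_of_eps (F : R -> R) (l : R) :
  (forall eps, 0 < eps -> exists M, forall t, M < t -> Rabs (F t - l) < eps) ->
  filterlim F (Rbar_locally p_infty) (locally l).
Proof.
intros H. apply filterlim_locally. intros eps.
destruct (H eps (cond_pos eps)) as [M HM]. exists M. intros t ht. now apply HM.
Qed.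

Lemma filterlim_right0_of_eps (F : R -> R) (l : R) :
  (forall eps, 0 < eps -> exists d, 0 < d /\ forall t, 0 < t < d -> Rabs (F t - l) < eps) ->
  filterlim F (at_right 0) (locally l).
Proof.
intros H. apply filterlim_locally. intros eps.
destruct (H eps (cond_pos eps)) as [d [hd Hd]].
exists (mkposreal d hd). intros y hy hy0. apply Hd.
change (Rabs (y - 0) < d) in hy. rewrite Rminus_0_r, Rabs_right in hy; lra.
Qed.

Lemma ex_lim_pinfty_incr_bounded (F : R -> R) (M : R) :
  (forall a b, 0 < a -> a <= b -> F a <= F b) ->
  (forall b, 0 < b -> F b <= M) ->
  exists l, filterlim F (Rbar_locally p_infty) (locally l).
Proof.
intros Hm Hb.
set (E := fun y => exists b, 0 < b /\ y = F b).
assert (hE : bound E) by (exists M; intros y [b [hb ->]]; now apply Hb).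
assert (hE2 : exists y, E y) by (exists (F 1), 1; split; [lra|reflexivity]).
destruct (completeness E hE hE2) as [l [hl1 hl2]].
exists l. apply filterlim_pinfty_of_eps. intros eps heps.
destruct (classic (exists b, 0 < b /\ l - eps < F b)) as [[b0 [hb0 hb0']]|hn].
- exists b0. intros t ht.
  assert (F b0 <= F t) by (apply Hm; lra).
  assert (F t <= l) by (apply hl1; exists t; split; [lra|reflexivity]).
  rewrite Rabs_left1 by lra. lra.
- exfalso. enough (l <= l - eps) by lra.
  apply hl2. intros y [b [hb ->]].
  apply Rnot_lt_le. intros hc. apply hn. now exists b.
Qed.

Lemma ex_lim_right0_incr_bounded (F : R -> R) (m : R) :
  (forall a b, 0 < a -> a <= b -> F a <= F b) ->
  (forall b, 0 < b -> m <= F b) ->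
  exists l, filterlim F (at_right 0) (locally l).
Proof.
intros Hm Hb.
set (E := fun y => exists b, 0 < b /\ y = - F b).
assert (hE : bound E).
{ exists (- m). intros y [b [hb ->]]. specialize (Hb b hb). lra. }
assert (hE2 : exists y, E y) by (exists (- F 1), 1; split; [lra|reflexivity]).
destruct (completeness E hE hE2) as [l [hl1 hl2]].
exists (- l). apply filterlim_right0_of_eps. intros eps heps.
destruct (classic (exists b, 0 < b /\ l - eps < - F b)) as [[b0 [hb0 hb0']]|hn].
- exists b0. split; [lra|]. intros t ht.
  assert (F t <= F b0) by (apply Hm; lra).
  assert (- F t <= l) by (apply hl1; exists t; split; [lra|reflexivity]).
  rewrite Rabs_right by lra. lra.
- exfalso. enough (l <= l - eps) by lra.
  apply hl2. intros y [b [hb ->]].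
  apply Rnot_lt_le. intros hc. apply hn. now exists b.
Qed.

Lemma at_right_0_pos : at_right 0 (fun a => 0 < a).
Proof. unfold at_right, within. apply filter_forall. auto. Qed.

Lemma pinfty_pos : Rbar_locally p_infty (fun b => 0 < b).
Proof. exists 0. auto. Qed.

Lemma is_RInt_gen_antiderivative (G g : R -> R) (la lb : R) :
  (forall t, 0 < t -> is_derive G t (g t)) ->
  (forall t, 0 < t -> continuous g t) ->
  filterlim G (at_right 0) (locally la) ->
  filterlim G (Rbar_locally p_infty) (locally lb) ->
  is_RInt_gen g (at_right 0) (Rbar_locally p_infty) (lb - la).
Proof.
intros hd hc h0 hi.
assert (hD : forall t, 0 < t -> Derive G t = g t) by (intros; apply is_derive_unique; auto).
assert (hpos : filter_prod (at_right 0) (Rbar_locally p_infty)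
  (fun ab => forall y, Rmin (fst ab) (snd ab) <= y <= Rmax (fst ab) (snd ab) -> 0 < y)).
{ apply (Filter_prod _ _ _ _ _ at_right_0_pos pinfty_pos).
  intros a b ha hb y hy. simpl in hy.
  assert (0 < Rmin a b) by (apply Rmin_glb_lt; auto). lra. }
apply (is_RInt_gen_ext (Derive G)).
{ eapply filter_imp; [|exact hpos]. intros ab hab y hy. apply hD, hab. lra. }
apply is_RInt_gen_Derive; auto.
- eapply filter_imp; [|exact hpos]. intros ab hab y hy. exists (g y). apply hd, hab, hy.
- eapply filter_imp; [|exact hpos]. intros ab hab y hy. specialize (hab y hy).
  apply (continuous_ext_loc (Derive G) g y); [|now apply hc].
  assert (hy0 : 0 < y / 2) by lra.
  exists (mkposreal _ hy0). intros z hz. change (Rabs (z - y) < y / 2) in hz.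
  apply Rabs_def2 in hz. symmetry. apply hD. lra.
Qed.

Definition gamma_integrand (x t : R) : R := Rpower t (x - 1) * exp (- t).

Lemma gamma_integrand_exp x t : gamma_integrand x t = exp ((x - 1) * ln t - t).
Proof. unfold gamma_integrand, Rpower. rewrite <- exp_plus. f_equal. Qed.

Lemma gamma_integrand_pos x t : 0 < gamma_integrand x t.
Proof. rewrite gamma_integrand_exp. apply exp_pos. Qed.

Lemma gamma_integrand_continuous x t : 0 < t -> continuous (gamma_integrand x) t.
Proof.
intros ht. apply (ex_derive_continuous (gamma_integrand x)).
apply (ex_derive_ext (fun t => exp ((x - 1) * ln t - t))).
- intros. now rewrite gamma_integrand_exp.
- auto_derive. lra.
Qed.

Lemma ex_RInt_gamma_integrand x a b : 0 < a -> 0 < b -> ex_RInt (gamma_integrand x) a b.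
Proof.
intros ha hb. apply (ex_RInt_continuous (V := R_CompleteNormedModule)).
intros z hz. apply gamma_integrand_continuous.
assert (0 < Rmin a b) by (apply Rmin_glb_lt; auto). lra.
Qed.

Lemma gamma_integrand_le_1 x t : 1 <= x -> 0 < t <= 1 -> gamma_integrand x t <= 1.
Proof.
intros hx ht. rewrite gamma_integrand_exp.
apply Rle_trans with (exp 0); [apply exp_le_compat|rewrite exp_0; lra].
assert (ln t <= 0) by (rewrite <- ln_1; apply ln_le; lra).
assert (0 <= (x - 1) * (- ln t)) by (apply Rmult_le_pos; lra). lra.
Qed.

Lemma pow_le_fact_exp N t : 0 <= t -> t ^ N <= INR (fact N) * exp t.
Proof.
intros ht. pose proof (exp_ge_taylor t N ht) as H.
assert (hf : 0 < INR (fact N)) by (apply lt_0_INR, lt_O_fact).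
assert (hlast : t ^ N / INR (fact N) <= sum_f_R0 (fun k => t ^ k / INR (fact k)) N).
{ destruct N as [|N]; simpl; [lra|].
  enough (0 <= sum_f_R0 (fun k => t ^ k / INR (fact k)) N) by lra.
  apply cond_pos_sum. intros k. apply Rle_mult_inv_pos; [apply pow_le; lra|].
  apply lt_0_INR, lt_O_fact. }
apply (Rmult_le_reg_r (/ INR (fact N))); [apply Rinv_0_lt_compat; lra|].
replace (INR (fact N) * exp t * / INR (fact N)) with (exp t) by (field; lra).
unfold Rdiv in hlast. lra.
Qed.

Lemma gamma_integrand_mul_sq_bounded x :
  exists K, 0 < K /\ forall t, 1 <= t -> gamma_integrand x t * t ^ 2 <= K.
Proof.
destruct (INR_unbounded (x + 1)) as [N hN].
exists (INR (fact N)). split; [apply lt_0_INR, lt_O_fact|].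
intros t ht.
replace (gamma_integrand x t * t ^ 2) with (Rpower t (x + 1) * exp (- t)).
2:{ unfold gamma_integrand. replace (x + 1) with ((x - 1) + INR 2) by (simpl; ring).
    rewrite Rpower_plus, Rpower_pow by lra. ring. }
assert (Rpower t (x + 1) <= t ^ N) by (rewrite <- Rpower_pow by lra; apply Rle_Rpower; lra).
pose proof (pow_le_fact_exp N t ltac:(lra)).
assert (hexp : exp t * exp (- t) = 1) by (rewrite <- exp_plus, Rplus_opp_r; apply exp_0).
pose proof (exp_pos (- t)).
apply Rle_trans with (t ^ N * exp (- t)); [apply Rmult_le_compat_r; lra|].
apply Rle_trans with (INR (fact N) * exp t * exp (- t)); [apply Rmult_le_compat_r; lra|].
rewrite Rmult_assoc, hexp. lra.
Qed.

Definition gamma_partial (x b : R) : R := RInt (gamma_integrand x) 1 b.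

Lemma RInt_gamma_integrand_ge_0 x a b : 0 < a <= b -> 0 <= RInt (gamma_integrand x) a b.
Proof.
intros hab. apply RInt_ge_0; [lra| |].
- apply ex_RInt_gamma_integrand; lra.
- intros; apply Rlt_le, gamma_integrand_pos.
Qed.

Lemma gamma_partial_incr x a b : 0 < a -> a <= b -> gamma_partial x a <= gamma_partial x b.
Proof.
intros ha hab. unfold gamma_partial.
rewrite <- (RInt_Chasles (gamma_integrand x) 1 a b) by (apply ex_RInt_gamma_integrand; lra).
pose proof (RInt_gamma_integrand_ge_0 x a b ltac:(lra)).
change (plus ?u ?v) with (u + v). lra.
Qed.

Lemma gamma_partial_ge x b : 1 <= x -> 0 < b -> -1 <= gamma_partial x b.
Proof.
intros hx hb. unfold gamma_partial.
destruct (Rle_lt_dec 1 b) as [h1|h1].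
- pose proof (RInt_gamma_integrand_ge_0 x 1 b ltac:(lra)). lra.
- rewrite <- opp_RInt_swap by (apply ex_RInt_gamma_integrand; lra).
  assert (RInt (gamma_integrand x) b 1 <= RInt (fun _ => 1) b 1).
  { apply RInt_le; [lra|apply ex_RInt_gamma_integrand; lra|apply ex_RInt_const|].
    intros t ht. apply gamma_integrand_le_1; lra. }
  rewrite RInt_const in H. change (scal ?u ?v) with (u * v) in H.
  change (opp ?u) with (- u). nra.
Qed.

Lemma gamma_partial_bounded x : exists M, forall b, 0 < b -> gamma_partial x b <= M.
Proof.
destruct (gamma_integrand_mul_sq_bounded x) as [K [hK HK]].
exists K. intros b hb. unfold gamma_partial.
destruct (Rle_lt_dec 1 b) as [h1|h1].
- assert (hi : is_RInt (fun t => K / t ^ 2) 1 b (minus (- K / b) (- K / 1))).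
  { apply (is_RInt_derive (fun t => - K / t)).
    - intros t ht. rewrite Rmin_left, Rmax_right in ht by lra.
      auto_derive; [lra|]. field. lra.
    - intros t ht. rewrite Rmin_left, Rmax_right in ht by lra.
      apply (ex_derive_continuous (fun t => K / t ^ 2)). auto_derive. nra. }
  assert (RInt (gamma_integrand x) 1 b <= RInt (fun t => K / t ^ 2) 1 b).
  { apply RInt_le; [lra|apply ex_RInt_gamma_integrand; lra|eexists; exact hi|].
    intros t ht. specialize (HK t ltac:(lra)).
    apply (Rmult_le_reg_r (t ^ 2)); [nra|].
    unfold Rdiv. rewrite Rmult_assoc, Rinv_l by nra. lra. }
  rewrite (is_RInt_unique _ _ _ _ hi) in H. change (minus ?u ?v) with (u - v) in H.
  assert (0 < K / b) by (apply Rdiv_lt_0_compat; lra). lra.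
- rewrite <- opp_RInt_swap by (apply ex_RInt_gamma_integrand; lra).
  pose proof (RInt_gamma_integrand_ge_0 x b 1 ltac:(lra)).
  change (opp ?u) with (- u). lra.
Qed.

Lemma is_derive_gamma_partial x y : 0 < y -> is_derive (gamma_partial x) y (gamma_integrand x y).
Proof.
intros hy. unfold gamma_partial.
apply (is_derive_RInt (gamma_integrand x) _ 1 y); [|apply gamma_integrand_continuous; lra].
assert (hy0 : 0 < y / 2) by lra.
exists (mkposreal _ hy0). intros z hz. change (Rabs (z - y) < y / 2) in hz.
apply Rabs_def2 in hz. apply (RInt_correct (V := R_CompleteNormedModule)).
apply ex_RInt_gamma_integrand; lra.
Qed.

Lemma is_RInt_gen_Gamma x : 1 <= x ->
  is_RInt_gen (gamma_integrand x) (at_right 0) (Rbar_locally p_infty) (Gamma x).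
Proof.
intros hx.
destruct (gamma_partial_bounded x) as [M HM].
destruct (ex_lim_pinfty_incr_bounded (gamma_partial x) M (gamma_partial_incr x) HM) as [lb hlb].
destruct (ex_lim_right0_incr_bounded (gamma_partial x) (-1) (gamma_partial_incr x)
  (fun b hb => gamma_partial_ge x b hx hb)) as [la hla].
pose proof (is_RInt_gen_antiderivative (gamma_partial x) (gamma_integrand x) la lb
  (is_derive_gamma_partial x) (gamma_integrand_continuous x) hla hlb) as H.
replace (Gamma x) with (lb - la); [exact H|].
symmetry. unfold Gamma.
apply (is_RInt_gen_unique (Fa := at_right 0) (Fb := Rbar_locally p_infty)), H.
Qed.

Lemma lim_right0_pow_exp x : 1 <= x ->
  filterlim (fun t => exp (x * ln t - t)) (at_right 0) (locally 0).
Proof.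
intros hx. apply filterlim_right0_of_eps. intros eps he.
exists (Rmin eps 1). split; [apply Rmin_glb_lt; lra|]. intros t ht.
pose proof (Rmin_l eps 1). pose proof (Rmin_r eps 1).
rewrite Rminus_0_r, Rabs_right by (apply Rle_ge, Rlt_le, exp_pos).
apply Rle_lt_trans with (exp (ln t)); [|rewrite exp_ln; lra].
apply exp_le_compat.
assert (ln t <= 0) by (rewrite <- ln_1; apply ln_le; lra).
assert (0 <= (x - 1) * (- ln t)) by (apply Rmult_le_pos; lra). lra.
Qed.

Lemma lim_pinfty_pow_exp x :
  filterlim (fun t => exp (x * ln t - t)) (Rbar_locally p_infty) (locally 0).
Proof.
destruct (gamma_integrand_mul_sq_bounded x) as [K [hK HK]].
apply filterlim_pinfty_of_eps. intros eps he. exists (Rmax 1 (K / eps)). intros t ht.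
pose proof (Rmax_l 1 (K / eps)). pose proof (Rmax_r 1 (K / eps)).
rewrite Rminus_0_r, Rabs_right by (apply Rle_ge, Rlt_le, exp_pos).
replace (exp (x * ln t - t)) with (gamma_integrand x t * t).
2:{ rewrite gamma_integrand_exp.
    replace (exp ((x - 1) * ln t - t) * t) with (exp ((x - 1) * ln t - t) * exp (ln t))
      by (rewrite exp_ln; lra).
    rewrite <- exp_plus. f_equal. ring. }
specialize (HK t ltac:(lra)).
assert (K < eps * t).
{ apply (Rmult_lt_reg_r (/ eps)); [apply Rinv_0_lt_compat; lra|].
  replace (eps * t * / eps) with t by (field; lra). exact (Rle_lt_trans _ _ _ H0 ht). }
pose proof (gamma_integrand_pos x t). nra.
Qed.

(* [t ^ x e^(-t)] is an antiderivative of [x g_x - g_(x+1)], with zero boundary values. *)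
Lemma Gamma_succ x : 1 <= x -> Gamma (x + 1) = x * Gamma x.
Proof.
intros hx.
set (G := fun t => exp (x * ln t - t)).
assert (hd : forall t, 0 < t ->
  is_derive G t (x * gamma_integrand x t - gamma_integrand (x + 1) t)).
{ intros t ht. unfold G. rewrite !gamma_integrand_exp.
  replace (x + 1 - 1) with x by ring.
  replace (exp ((x - 1) * ln t - t)) with (exp (x * ln t - t) / t).
  2:{ replace (exp (x * ln t - t) / t) with (exp (x * ln t - t) * exp (- ln t))
        by (rewrite exp_Ropp, exp_ln; [field|]; lra).
      rewrite <- exp_plus. f_equal. ring. }
  auto_derive; [lra|]. unfold Rminus. field. lra. }
assert (hc : forall t, 0 < t ->
  continuous (fun t => x * gamma_integrand x t - gamma_integrand (x + 1) t) t).
{ intros t ht. apply (continuous_minus (fun t => x * gamma_integrand x t)).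
  - apply (continuous_scal_r x (gamma_integrand x)), gamma_integrand_continuous; lra.
  - apply gamma_integrand_continuous; lra. }
pose proof (is_RInt_gen_antiderivative G _ 0 0 hd hc (lim_right0_pow_exp x hx)
  (lim_pinfty_pow_exp x)) as HR.
pose proof (is_RInt_gen_scal _ x _ (is_RInt_gen_Gamma x hx)) as HG.
pose proof (is_RInt_gen_minus _ _ _ _ HG HR) as HS.
unfold Gamma at 1. apply (is_RInt_gen_unique (Fa := at_right 0) (Fb := Rbar_locally p_infty)).
replace (x * Gamma x) with (minus (scal x (Gamma x)) (0 - 0))
  by (unfold minus, plus, opp, scal; simpl; unfold mult; simpl; ring).
eapply is_RInt_gen_ext; [|exact HS].
apply filter_forall. intros ab y hy.
unfold minus, plus, opp, scal; simpl; unfold mult; simpl. unfold gamma_integrand. ring.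
Qed.

Lemma Gamma_1 : Gamma 1 = 1.
Proof.
set (G := fun t => exp (- t)).
assert (hd : forall t, 0 < t -> is_derive G t (- gamma_integrand 1 t)).
{ intros t ht. unfold G, gamma_integrand. rewrite Rminus_diag, Rpower_O by lra.
  auto_derive; [trivial|]. ring. }
assert (hc : forall t, 0 < t -> continuous (fun t => - gamma_integrand 1 t) t).
{ intros t ht. apply (continuous_opp (gamma_integrand 1)), gamma_integrand_continuous, ht. }
assert (h0 : filterlim G (at_right 0) (locally 1)).
{ apply filterlim_right0_of_eps. intros eps he. exists eps. split; [lra|]. intros t ht.
  unfold G. pose proof (exp_ineq1_le (- t)).
  assert (exp (- t) <= 1) by (rewrite <- exp_0; apply exp_le_compat; lra).
  rewrite Rabs_left1 by lra. lra. }
assert (hi : filterlim G (Rbar_locally p_infty) (locally 0)).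
{ apply (filterlim_ext (fun t => exp (0 * ln t - t))); [|apply lim_pinfty_pow_exp].
  intros t. unfold G. f_equal. ring. }
pose proof (is_RInt_gen_opp _ _ (is_RInt_gen_antiderivative G _ _ _ hd hc h0 hi)) as HR.
unfold Gamma. apply (is_RInt_gen_unique (Fa := at_right 0) (Fb := Rbar_locally p_infty)).
unfold opp at 2 in HR; simpl in HR. replace (- (0 - 1)) with 1 in HR by ring.
eapply is_RInt_gen_ext; [|exact HR].
apply filter_forall. intros ab y hy. unfold opp; simpl. unfold gamma_integrand. ring.
Qed.

Lemma gamma_integrand_add_half_le x t : 0 < x -> 0 < t ->
  gamma_integrand (x + /2) t
  <= sqrt x / 2 * gamma_integrand x t + / (2 * sqrt x) * gamma_integrand (x + 1) t.
Proof.
intros hx ht.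
assert (e1 : gamma_integrand (x + /2) t = gamma_integrand x t * sqrt t).
{ unfold gamma_integrand. replace (x + /2 - 1) with ((x - 1) + /2) by ring.
  rewrite Rpower_plus, Rpower_sqrt by lra. ring. }
assert (e2 : gamma_integrand (x + 1) t = gamma_integrand x t * t).
{ unfold gamma_integrand. replace (x + 1 - 1) with ((x - 1) + 1) by ring.
  rewrite Rpower_plus, Rpower_1 by lra. ring. }
rewrite e1, e2.
assert (hg : 0 < gamma_integrand x t) by apply gamma_integrand_pos.
assert (hsx : 0 < sqrt x) by (apply sqrt_lt_R0; lra).
assert (hsx2 : sqrt x * sqrt x = x) by (apply sqrt_sqrt; lra).
assert (hst2 : sqrt t * sqrt t = t) by (apply sqrt_sqrt; lra).
(* AM-GM: [sqrt t <= (x + t) / (2 sqrt x)]. *)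
assert (key : sqrt t <= sqrt x / 2 + t / (2 * sqrt x)).
{ apply (Rmult_le_reg_r (2 * sqrt x)); [lra|].
  replace ((sqrt x / 2 + t / (2 * sqrt x)) * (2 * sqrt x)) with (x + t)
    by (field_simplify; [nra|lra]).
  pose proof (pow2_ge_0 (sqrt x - sqrt t)). nra. }
replace (sqrt x / 2 * gamma_integrand x t + / (2 * sqrt x) * (gamma_integrand x t * t))
  with (gamma_integrand x t * (sqrt x / 2 + t / (2 * sqrt x))) by (field; lra).
apply Rmult_le_compat_l; lra.
Qed.

Lemma Gamma_add_half_le x : 1 <= x -> Gamma (x + /2) <= sqrt x * Gamma x.
Proof.
intros hx.
assert (hsx : 0 < sqrt x) by (apply sqrt_lt_R0; lra).
pose proof (is_RInt_gen_scal _ (sqrt x / 2) _ (is_RInt_gen_Gamma x hx)) as H1.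
assert (hx1 : 1 <= x + 1) by lra. assert (hx2 : 1 <= x + /2) by lra.
pose proof (is_RInt_gen_scal _ (/ (2 * sqrt x)) _ (is_RInt_gen_Gamma (x + 1) hx1)) as H2.
pose proof (is_RInt_gen_plus _ _ _ _ H1 H2) as H3.
pose proof (is_RInt_gen_Gamma (x + /2) hx2) as H4.
replace (sqrt x * Gamma x)
  with (plus (scal (sqrt x / 2) (Gamma x)) (scal (/ (2 * sqrt x)) (Gamma (x + 1)))).
2:{ rewrite Gamma_succ by lra. unfold plus, scal; simpl; unfold mult; simpl.
    assert (hsx2 : sqrt x * sqrt x = x) by (apply sqrt_sqrt; lra).
    replace (x * Gamma x) with (sqrt x * sqrt x * Gamma x) by (rewrite hsx2; ring).
    field. lra. }
apply Rle_trans with (norm (Gamma (x + /2))); [apply Rle_abs|].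
eapply (RInt_gen_norm (V := R_CompleteNormedModule) (Fa := at_right 0)
  (Fb := Rbar_locally p_infty)); [| |exact H4|exact H3].
- apply (Filter_prod _ _ _ (fun a => 0 < a < 1) (fun b => 1 < b)).
  + exists (mkposreal 1 Rlt_0_1). intros y hy hy0.
    change (Rabs (y - 0) < 1) in hy. rewrite Rminus_0_r, Rabs_right in hy by lra. lra.
  + exists 1. auto.
  + intros a b ha hb. simpl. lra.
- apply (Filter_prod _ _ _ (fun a => 0 < a) (fun b => 1 < b) at_right_0_pos).
  + exists 1. auto.
  + intros a b ha hb y hy. simpl in hy.
    unfold norm; simpl; unfold abs; simpl.
    rewrite Rabs_right by apply Rle_ge, Rlt_le, gamma_integrand_pos.
    apply gamma_integrand_add_half_le; lra.
Qed.

Definition wallis_int (n : nat) : R := RInt (fun t => sin t ^ n) 0 (PI / 2).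

Lemma ex_RInt_sin_pow n : ex_RInt (fun t => sin t ^ n) 0 (PI / 2).
Proof.
apply (ex_RInt_continuous (V := R_CompleteNormedModule)). intros z hz.
apply (ex_derive_continuous (fun t => sin t ^ n)). auto_derive. trivial.
Qed.

Lemma wallis_int_0 : wallis_int 0 = PI / 2.
Proof.
unfold wallis_int. simpl. rewrite RInt_const. unfold scal; simpl; unfold mult; simpl. ring.
Qed.

Lemma wallis_int_1 : wallis_int 1 = 1.
Proof.
unfold wallis_int. apply is_RInt_unique.
assert (H : is_RInt sin 0 (PI / 2) (minus (- cos (PI / 2)) (- cos 0))).
{ apply (is_RInt_derive (fun t => - cos t)).
  - intros. auto_derive; [trivial|]. ring.
  - intros. apply (ex_derive_continuous sin). auto_derive. trivial. }
rewrite cos_PI2, cos_0 in H. unfold minus, plus, opp in H; simpl in H.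
match type of H with is_RInt _ _ _ ?v => replace v with 1 in H by ring end.
apply (is_RInt_ext sin); [|exact H]. intros; simpl; ring.
Qed.

Lemma wallis_int_rec n : INR (n + 2) * wallis_int (n + 2) = INR (n + 1) * wallis_int n.
Proof.
set (g := fun t => INR (n + 2) * sin t ^ (n + 2) - INR (n + 1) * sin t ^ n).
assert (H1 : is_RInt g 0 (PI / 2)
  (minus (- cos (PI / 2) * sin (PI / 2) ^ (n + 1)) (- cos 0 * sin 0 ^ (n + 1)))).
{ apply (is_RInt_derive (fun t => - cos t * sin t ^ (n + 1))).
  - intros x hx. unfold g. auto_derive; [trivial|].
    replace (pred (n + 1)) with n by lia.
    replace (sin x ^ (n + 2)) with (sin x ^ n * (sin x * sin x)) by (rewrite pow_add; simpl; ring).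
    replace (sin x ^ (n + 1)) with (sin x ^ n * sin x) by (rewrite pow_add; simpl; ring).
    rewrite !plus_INR. simpl.
    pose proof (sin2_cos2 x) as hc. unfold Rsqr in hc.
    pose proof (f_equal (fun z => (INR n + 1) * sin x ^ n * z) hc) as h. cbv beta in h. lra.
  - intros x hx. apply (ex_derive_continuous g). unfold g. auto_derive. auto. }
rewrite cos_PI2, cos_0, sin_0, pow_i in H1 by lia.
assert (H2 : is_RInt g 0 (PI / 2)
  (minus (scal (INR (n + 2)) (wallis_int (n + 2))) (scal (INR (n + 1)) (wallis_int n)))).
{ apply (is_RInt_ext (fun y => minus (scal (INR (n + 2)) (sin y ^ (n + 2)))
                                     (scal (INR (n + 1)) (sin y ^ n)))).
  { intros; unfold g, minus, plus, opp, scal; simpl; unfold mult; simpl. ring. }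
  pose proof (RInt_correct (V := R_CompleteNormedModule) _ _ _ (ex_RInt_sin_pow (n + 2))) as A.
  pose proof (RInt_correct (V := R_CompleteNormedModule) _ _ _ (ex_RInt_sin_pow n)) as B.
  exact (is_RInt_minus _ _ _ _ _ _ (is_RInt_scal _ _ _ _ _ A) (is_RInt_scal _ _ _ _ _ B)). }
apply (is_RInt_unique (V := R_CompleteNormedModule)) in H1.
apply (is_RInt_unique (V := R_CompleteNormedModule)) in H2.
rewrite H1 in H2. unfold minus, plus, opp, scal in H2; simpl in H2; unfold mult in H2; simpl in H2.
lra.
Qed.

Lemma wallis_int_decr n : wallis_int (S n) <= wallis_int n.
Proof.
unfold wallis_int. apply RInt_le; [pose proof PI_RGT_0; lra|apply ex_RInt_sin_pow..|].
intros x hx. assert (0 <= sin x) by (apply sin_ge_0; lra).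
pose proof (SIN_bound x). assert (0 <= sin x ^ n) by (apply pow_le; lra).
simpl. nra.
Qed.

Definition factR (k : nat) : R := INR (fact k).

Lemma factR_pos k : 0 < factR k.
Proof. apply lt_0_INR, lt_O_fact. Qed.

Lemma factR_S k : factR (S k) = INR (S k) * factR k.
Proof. unfold factR. rewrite fact_simpl, mult_INR. reflexivity. Qed.

Lemma wallis_int_closed j :
  wallis_int (2 * j) = PI / 2 * factR (2 * j) / (4 ^ j * factR j ^ 2) /\
  wallis_int (2 * j + 1) = 4 ^ j * factR j ^ 2 / factR (2 * j + 1).
Proof.
induction j as [|j [IH1 IH2]].
- simpl. rewrite wallis_int_0, wallis_int_1. unfold factR; simpl. split; field.
- set (a := INR j).
  assert (ha : 0 <= a) by apply pos_INR.
  pose proof (factR_pos j). pose proof (factR_pos (2 * j)).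
  assert (h4 : 0 < 4 ^ j) by (apply pow_lt; lra).
  assert (i1 : INR (2 * j + 1) = 2 * a + 1) by (unfold a; rewrite plus_INR, mult_INR; simpl; ring).
  assert (i2 : INR (2 * j + 2) = 2 * a + 2) by (unfold a; rewrite plus_INR, mult_INR; simpl; ring).
  assert (i3 : INR (2 * j + 1 + 2) = 2 * a + 3)
    by (unfold a; rewrite !plus_INR, mult_INR; simpl; ring).
  assert (f1 : factR (2 * j + 1) = (2 * a + 1) * factR (2 * j)).
  { rewrite <- i1. replace (2 * j + 1)%nat with (S (2 * j)) by lia. apply factR_S. }
  assert (f2 : factR (2 * j + 2) = (2 * a + 2) * ((2 * a + 1) * factR (2 * j))).
  { rewrite <- i2, <- f1. replace (2 * j + 2)%nat with (S (2 * j + 1)) by lia. apply factR_S. }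
  assert (f3 : factR (2 * j + 1 + 2) = (2 * a + 3) * ((2 * a + 2) * ((2 * a + 1) * factR (2 * j)))).
  { rewrite <- i3, <- f2. replace (2 * j + 1 + 2)%nat with (S (2 * j + 2)) by lia.
    apply factR_S. }
  assert (fS : factR (S j) = (a + 1) * factR j) by (rewrite factR_S, S_INR; reflexivity).
  pose proof (wallis_int_rec (2 * j)) as R1. pose proof (wallis_int_rec (2 * j + 1)) as R2.
  replace (2 * j + 1 + 1)%nat with (2 * j + 2)%nat in R2 by lia.
  rewrite IH1, i1, i2 in R1. rewrite IH2, i2, i3, f1 in R2.
  replace (2 * S j)%nat with (2 * j + 2)%nat by lia.
  replace (2 * j + 2 + 1)%nat with (2 * j + 1 + 2)%nat by lia.
  rewrite f2, f3, fS. change (4 ^ S j) with (4 * 4 ^ j).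
  split.
  + apply (Rmult_eq_reg_l (2 * a + 2)); [rewrite R1; field|]; repeat split; lra.
  + apply (Rmult_eq_reg_l (2 * a + 3)); [rewrite R2; field|]; repeat split; lra.
Qed.

Lemma wallis_ineq j : (1 <= j)%nat ->
  PI / 2 * INR (2 * j) * factR (2 * j) ^ 2 <= 16 ^ j * factR j ^ 4 /\
  16 ^ j * factR j ^ 4 <= PI / 2 * INR (2 * j + 1) * factR (2 * j) ^ 2.
Proof.
intros hj. destruct (wallis_int_closed j) as [E1 E2].
set (q := 4 ^ j * factR j ^ 2) in E1, E2.
assert (hq : 0 < q) by (apply Rmult_lt_0_compat; [apply pow_lt; lra|apply pow_lt, factR_pos]).
assert (h16 : 16 ^ j * factR j ^ 4 = q ^ 2).
{ unfold q. replace 16 with (4 * 4) by ring. rewrite Rpow_mult_distr. ring. }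
assert (f1 : factR (2 * j + 1) = INR (2 * j + 1) * factR (2 * j)).
{ replace (2 * j + 1)%nat with (S (2 * j)) by lia. apply factR_S. }
pose proof (factR_pos (2 * j)). pose proof PI_RGT_0.
assert (0 < INR (2 * j)) by (apply lt_0_INR; lia).
assert (0 < INR (2 * j + 1)) by (apply lt_0_INR; lia).
rewrite h16. split.
- assert (M : INR (2 * j) * wallis_int (2 * j) <= INR (2 * j + 1) * wallis_int (2 * j + 1)).
  { destruct j as [|i]; [lia|].
    pose proof (wallis_int_decr (2 * S i - 1)) as M.
    pose proof (wallis_int_rec (2 * S i - 1)) as R.
    replace (S (2 * S i - 1)) with (2 * S i)%nat in M by lia.
    replace (2 * S i - 1 + 2)%nat with (2 * S i + 1)%nat in R by lia.
    replace (2 * S i - 1 + 1)%nat with (2 * S i)%nat in R by lia.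
    rewrite R. apply Rmult_le_compat_l; [apply pos_INR|exact M]. }
  rewrite E1, E2, f1 in M.
  replace (PI / 2 * INR (2 * j) * factR (2 * j) ^ 2)
    with (INR (2 * j) * (PI / 2 * factR (2 * j) / q) * (q * factR (2 * j))) by (field; lra).
  replace (q ^ 2) with (INR (2 * j + 1) * (q / (INR (2 * j + 1) * factR (2 * j)))
    * (q * factR (2 * j))) by (field; lra).
  apply Rmult_le_compat_r; [nra|exact M].
- pose proof (wallis_int_decr (2 * j)) as M.
  replace (S (2 * j)) with (2 * j + 1)%nat in M by lia.
  rewrite E1, E2, f1 in M.
  replace (q ^ 2) with (q / (INR (2 * j + 1) * factR (2 * j))
    * (INR (2 * j + 1) * q * factR (2 * j))) by (field; lra).
  replace (PI / 2 * INR (2 * j + 1) * factR (2 * j) ^ 2)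
    with (PI / 2 * factR (2 * j) / q * (INR (2 * j + 1) * q * factR (2 * j))) by (field; lra).
  apply Rmult_le_compat_r; [|exact M].
  apply Rmult_le_pos; [apply Rmult_le_pos|]; lra.
Qed.

Definition half_fact (n : nat) : R := Gamma (INR n / 2 + 1).

Lemma Gamma_INR_succ k : Gamma (INR k + 1) = factR k.
Proof.
induction k as [|k IH].
- simpl. rewrite Rplus_0_l, Gamma_1. reflexivity.
- pose proof (pos_INR k).
  rewrite S_INR, Gamma_succ, IH, factR_S, S_INR by lra. reflexivity.
Qed.

Lemma half_fact_even k : half_fact (2 * k) = factR k.
Proof.
unfold half_fact. rewrite mult_INR. replace (INR 2 * INR k / 2 + 1) with (INR k + 1)
  by (simpl; field). apply Gamma_INR_succ.
Qed.

Lemma half_fact_add2 n : half_fact (n + 2) = (INR n / 2 + 1) * half_fact n.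
Proof.
unfold half_fact. rewrite plus_INR.
replace ((INR n + INR 2) / 2 + 1) with ((INR n / 2 + 1) + 1) by (simpl; field).
apply Gamma_succ. pose proof (pos_INR n). lra.
Qed.

Lemma half_fact_odd k : half_fact (2 * k + 1) = Gamma (INR k + 1 + /2).
Proof. unfold half_fact. f_equal. rewrite plus_INR, mult_INR. simpl. field. Qed.

Lemma half_fact_odd_le k : half_fact (2 * k + 1) <= sqrt (INR k + 1) * factR k.
Proof.
rewrite half_fact_odd, <- Gamma_INR_succ. apply Gamma_add_half_le.
pose proof (pos_INR k). lra.
Qed.

Lemma factR_succ_le_half_fact k : factR (S k) <= sqrt (INR k + 1 + /2) * half_fact (2 * k + 1).
Proof.
rewrite half_fact_odd, <- Gamma_INR_succ, S_INR.
replace (INR k + 1 + 1) with ((INR k + 1 + /2) + /2) by field.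
apply Gamma_add_half_le. pose proof (pos_INR k). lra.
Qed.

Lemma half_fact_pos n : 0 < half_fact n.
Proof.
destruct (Nat.Even_or_Odd n) as [[k ->]|[k ->]].
- rewrite half_fact_even. apply factR_pos.
- pose proof (factR_succ_le_half_fact k). pose proof (factR_pos (S k)).
  assert (0 < sqrt (INR k + 1 + /2)) by (apply sqrt_lt_R0; pose proof (pos_INR k); lra).
  destruct (Rle_or_lt (half_fact (2 * k + 1)) 0) as [h|h]; [nra|exact h].
Qed.

Lemma ln_le_sub_1 a : 0 < a -> ln a <= a - 1.
Proof.
intros ha. rewrite <- (ln_exp (a - 1)). apply ln_le; [exact ha|].
pose proof (exp_ineq1_le (a - 1)). lra.
Qed.

Lemma ln_sub_le p q : 0 < p -> 0 < q -> ln p - ln q <= (p - q) / q.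
Proof.
intros hp hq. rewrite <- ln_div by lra.
replace ((p - q) / q) with (p / q - 1) by (field; lra).
apply ln_le_sub_1, Rdiv_lt_0_compat; lra.
Qed.

Lemma ln_succ_sub_bounds y : 0 < y -> 1 / (y + 1) <= ln (y + 1) - ln y <= 1 / y.
Proof.
intros hy. split.
- pose proof (ln_sub_le y (y + 1) ltac:(lra) ltac:(lra)).
  replace ((y - (y + 1)) / (y + 1)) with (- (1 / (y + 1))) in H by (field; lra). lra.
- pose proof (ln_sub_le (y + 1) y ltac:(lra) hy).
  replace ((y + 1 - y) / y) with (1 / y) in H by (field; lra). lra.
Qed.

Lemma ln_sqrt y : 0 < y -> ln (sqrt y) = ln y / 2.
Proof.
intros hy. pose proof (sqrt_lt_R0 y hy).
rewrite <- (sqrt_sqrt y) at 2 by lra. rewrite ln_mult by lra. field.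
Qed.

Lemma ln_half_fact_odd_bounds k :
  - ln (INR k + 1) / 2 <= ln (factR k) - ln (half_fact (2 * k + 1)) <=
  ln (INR k + 1 + /2) / 2 - ln (INR k + 1).
Proof.
pose proof (half_fact_odd_le k) as GU. pose proof (factR_succ_le_half_fact k) as GL.
pose proof (half_fact_pos (2 * k + 1)). pose proof (factR_pos k). pose proof (pos_INR k).
rewrite factR_S, S_INR in GL.
assert (hs1 : 0 < sqrt (INR k + 1)) by (apply sqrt_lt_R0; lra).
assert (hs2 : 0 < sqrt (INR k + 1 + /2)) by (apply sqrt_lt_R0; lra).
apply ln_le in GU; [|assumption]. apply ln_le in GL; [|apply Rmult_lt_0_compat; lra].
rewrite ln_mult, ln_sqrt in GU by lra. rewrite !ln_mult, ln_sqrt in GL by lra.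
split; lra.
Qed.

Definition log_err (c : R) (n : nat) : R :=
  - ln (half_fact n) + ln (PI * (INR n + c)) / 2 - INR n / 2 * (ln 2 + 1 - ln (INR n)).

Lemma ln_Omega_sub_ln_vol_bound c n : (1 <= n)%nat -> 0 < INR n + c ->
  ln (Omega n) - ln (vol_bound c n) = log_err c n.
Proof.
intros hn hc. assert (hx : 1 <= INR n) by (apply (le_INR 1); lia).
pose proof PI_RGT_0 as hpi. pose proof (half_fact_pos n).
unfold Omega, vol_bound, log_err.
rewrite ln_div by (try (unfold Rpower; apply exp_pos); assumption).
rewrite ln_mult by (try (apply Rinv_0_lt_compat, sqrt_lt_R0; nra); unfold Rpower; apply exp_pos).
rewrite ln_Rinv by (apply sqrt_lt_R0; nra).
rewrite ln_sqrt by nra. rewrite !ln_Rpower.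
rewrite ln_div by (try lra; pose proof (exp_pos 1); nra).
rewrite !ln_mult by (try lra; try nra; apply exp_pos).
rewrite ln_exp. fold (half_fact n). ring.
Qed.

Lemma Omega_pos n : 0 < Omega n.
Proof.
unfold Omega. apply Rdiv_lt_0_compat; [unfold Rpower; apply exp_pos|apply half_fact_pos].
Qed.

Lemma vol_bound_pos c n : 0 < INR n + c -> 0 < vol_bound c n.
Proof.
intros h. unfold vol_bound. apply Rmult_lt_0_compat.
- apply Rinv_0_lt_compat, sqrt_lt_R0. pose proof PI_RGT_0. nra.
- unfold Rpower; apply exp_pos.
Qed.

Lemma log_err_add2 (c : R -> R) n : (1 <= n)%nat ->
  0 < c (INR n) -> 0 < c (INR (n + 2)) ->
  log_err (c (INR (n + 2))) (n + 2) - log_err (c (INR n)) n = - err_step c (INR n) / 2.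
Proof.
intros hn h1 h2. assert (hx : 1 <= INR n) by (apply (le_INR 1); lia).
pose proof PI_RGT_0 as hpi. pose proof (half_fact_pos n).
unfold log_err, err_step, log_ratio, step_arg. rewrite half_fact_add2.
rewrite plus_INR in *. simpl (INR 2) in *. replace (1 + 1) with 2 in * by ring.
set (x := INR n) in *.
replace ((1 + / (x + 1)) / (1 - / (x + 1))) with ((x + 2) / x) by (field; lra).
set (A := x + 2 + c (x + 2)). set (B := x + c x).
assert (hA : 0 < A) by (unfold A; lra). assert (hB : 0 < B) by (unfold B; lra).
replace ((1 + (A - B) / (A + B)) / (1 - (A - B) / (A + B))) with (A / B) by (field; lra).
replace (x / 2 + 1) with ((x + 2) / 2) by field.
rewrite !ln_mult by (try apply half_fact_pos; lra).
rewrite !ln_div by lra.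
field.
Qed.

Definition err_theta (n : nat) : R := log_err (theta n) n.

Definition err_nu (n : nat) : R := log_err (nu n) n.

Lemma theta_bounds n : (1 <= n)%nat -> 1/5 <= theta n < 1.
Proof. intros hn. apply theta_R_bounds, (le_INR 1); lia. Qed.

Lemma nu_bounds n : (1 <= n)%nat -> 0 < nu n <= theta n.
Proof. intros hn. apply nu_R_bounds, (le_INR 1); lia. Qed.

Lemma err_theta_add2_lt n : (4 <= n)%nat -> err_theta (n + 2) < err_theta n.
Proof.
intros hn. assert (hx : 4 <= INR n) by (apply (le_INR 4) in hn; simpl in hn; lra).
assert (hn' : (1 <= n)%nat) by lia.
assert (h1 : 0 < theta n) by (pose proof (theta_bounds n hn'); lra).
assert (h2 : 0 < theta (n + 2)) by (pose proof (theta_bounds (n + 2) ltac:(lia)); lra).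
pose proof (log_err_add2 theta_R n hn' h1 h2) as h.
pose proof (err_step_theta_pos (INR n) hx).
change (log_err (theta_R (INR (n + 2))) (n + 2) < log_err (theta_R (INR n)) n). lra.
Qed.

Lemma err_nu_lt_add2 n : (1 <= n)%nat -> err_nu n < err_nu (n + 2).
Proof.
intros hn. assert (hx : 1 <= INR n) by (apply (le_INR 1); lia).
destruct (nu_bounds n hn) as [h1 _]. destruct (nu_bounds (n + 2)) as [h2 _]; [lia|].
pose proof (log_err_add2 nu_R n hn h1 h2) as h.
pose proof (err_step_nu_neg (INR n) hx).
change (log_err (nu_R (INR n)) n < log_err (nu_R (INR (n + 2))) (n + 2)). lra.
Qed.

Lemma err_theta_7_lt_3 : err_theta 7 < err_theta 3.
Proof.
assert (hpos : forall n, (1 <= n)%nat -> 0 < theta n)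
  by (intros n hn; pose proof (theta_bounds n hn); lra).
pose proof (log_err_add2 theta_R 3 ltac:(lia) (hpos 3%nat ltac:(lia)) (hpos 5%nat ltac:(lia)))
  as h3.
pose proof (log_err_add2 theta_R 5 ltac:(lia) (hpos 5%nat ltac:(lia)) (hpos 7%nat ltac:(lia)))
  as h5.
simpl (3 + 2)%nat in h3. simpl (5 + 2)%nat in h5.
change (log_err (theta_R (INR 7)) 7 < log_err (theta_R (INR 3)) 3).
replace (INR 3) with 3 in * by (simpl; ring). replace (INR 5) with 5 in * by (simpl; ring).
pose proof err_step_theta_3_5. lra.
Qed.

Lemma err_theta_decr n m : (4 <= n)%nat -> err_theta (n + 2 * m) <= err_theta n.
Proof.
intros hn. induction m as [|m IH].
- rewrite Nat.mul_0_r, Nat.add_0_r. lra.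
- replace (n + 2 * S m)%nat with (n + 2 * m + 2)%nat by lia.
  pose proof (err_theta_add2_lt (n + 2 * m) ltac:(lia)). lra.
Qed.

Lemma err_nu_incr n m : (1 <= n)%nat -> err_nu n <= err_nu (n + 2 * m).
Proof.
intros hn. induction m as [|m IH].
- rewrite Nat.mul_0_r, Nat.add_0_r. lra.
- replace (n + 2 * S m)%nat with (n + 2 * m + 2)%nat by lia.
  pose proof (err_nu_lt_add2 (n + 2 * m) ltac:(lia)). lra.
Qed.

Lemma err_theta_sub_err_nu n : (1 <= n)%nat -> 0 <= err_theta n - err_nu n <= 1 / INR n.
Proof.
intros hn. assert (hx : 1 <= INR n) by (apply (le_INR 1); lia).
destruct (nu_bounds n hn). destruct (theta_bounds n hn). pose proof PI_RGT_0.
unfold err_theta, err_nu, log_err. rewrite !ln_mult by lra.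
assert (ln (INR n + nu n) <= ln (INR n + theta n)) by (apply ln_le; lra).
pose proof (ln_sub_le (INR n + theta n) (INR n + nu n) ltac:(lra) ltac:(lra)).
assert ((INR n + theta n - (INR n + nu n)) / (INR n + nu n) <= 1 / INR n).
{ apply Rle_trans with (1 / (INR n + nu n)).
  - apply Rmult_le_compat_r; [apply Rlt_le, Rinv_0_lt_compat|]; lra.
  - apply Rmult_le_compat_l; [lra|]. apply Rinv_le_contravar; lra. }
split; lra.
Qed.

Lemma ln_wallis_ineq j : (1 <= j)%nat ->
  ln PI + ln (INR j) + 2 * ln (factR (2 * j)) <= 4 * INR j * ln 2 + 4 * ln (factR j) /\
  4 * INR j * ln 2 + 4 * ln (factR j)
    <= ln PI - ln 2 + ln (2 * INR j + 1) + 2 * ln (factR (2 * j)).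
Proof.
intros hj. assert (hx : 1 <= INR j) by (apply (le_INR 1); lia).
destruct (wallis_ineq j hj) as [W1 W2].
pose proof PI_RGT_0. pose proof (factR_pos j). pose proof (factR_pos (2 * j)).
assert (A1 : ln (16 ^ j * factR j ^ 4) = 4 * INR j * ln 2 + 4 * ln (factR j)).
{ rewrite ln_mult, !ln_pow by (try apply pow_lt; lra).
  replace 16 with (2 ^ 4) by ring. rewrite ln_pow by lra. simpl (INR 4). ring. }
assert (A2 : ln (PI / 2 * INR (2 * j) * factR (2 * j) ^ 2)
  = ln PI + ln (INR j) + 2 * ln (factR (2 * j))).
{ replace (PI / 2 * INR (2 * j)) with (PI * INR j) by (rewrite mult_INR; simpl; field).
  rewrite !ln_mult, ln_pow by (try apply pow_lt; nra). simpl (INR 2). ring. }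
assert (A3 : ln (PI / 2 * INR (2 * j + 1) * factR (2 * j) ^ 2)
  = ln PI - ln 2 + ln (2 * INR j + 1) + 2 * ln (factR (2 * j))).
{ replace (INR (2 * j + 1)) with (2 * INR j + 1) by (rewrite plus_INR, mult_INR; simpl; ring).
  replace (PI / 2 * (2 * INR j + 1) * factR (2 * j) ^ 2)
    with (PI * (2 * INR j + 1) * factR (2 * j) ^ 2 / 2) by field.
  assert (0 < factR (2 * j) ^ 2) by (apply pow_lt; lra).
  assert (0 < PI * (2 * INR j + 1)) by nra.
  assert (0 < PI * (2 * INR j + 1) * factR (2 * j) ^ 2) by nra.
  rewrite ln_div, ln_mult, ln_mult, ln_pow by lra. simpl (INR 2). ring. }
assert (h16 : 0 < 16 ^ j * factR j ^ 4)
  by (apply Rmult_lt_0_compat; apply pow_lt; lra).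
apply ln_le in W1; [|apply Rmult_lt_0_compat; [|apply pow_lt]; try nra;
  apply Rmult_lt_0_compat; [lra|apply lt_0_INR; lia]].
apply ln_le in W2; [|exact h16].
rewrite A1, A2 in W1. rewrite A1, A3 in W2. split; lra.
Qed.

Lemma log_err_even_combination c1 c2 j : (1 <= j)%nat -> 0 < c1 -> 0 < c2 ->
  4 * log_err c1 (2 * j) - 2 * log_err c2 (2 * (2 * j)) =
  2 * ln (factR (2 * j)) - 4 * ln (factR j) - 4 * INR j * ln 2 + ln PI
  + 2 * ln (2 * INR j + c1) - ln (4 * INR j + c2).
Proof.
intros hj h1 h2. assert (hx : 1 <= INR j) by (apply (le_INR 1); lia). pose proof PI_RGT_0.
unfold log_err. rewrite !half_fact_even, !mult_INR. replace (INR 2) with 2 by (simpl; ring).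
replace (2 * (2 * INR j)) with (2 * 2 * INR j) by ring.
rewrite !ln_mult by lra. replace (2 * 2 * INR j + c2) with (4 * INR j + c2) by ring. field.
Qed.

Lemma wallis_lower_remainder_le x c1 c2 : 1 <= x -> 0 < c1 < 1 -> 0 < c2 ->
  2 * ln (2 * x + c1) - ln x - ln (4 * x + c2) <= 5/4 / x.
Proof.
intros hx h1 h2.
replace (2 * ln (2 * x + c1) - ln x - ln (4 * x + c2))
  with (ln ((2 * x + c1) ^ 2) - ln (x * (4 * x + c2)))
  by (rewrite ln_pow, ln_mult by lra; simpl; ring).
assert (hd : 0 < x * (4 * x + c2)) by nra.
eapply Rle_trans; [apply ln_sub_le; nra|].
replace (5/4 / x) with (5/4 * (4 * x + c2) / (x * (4 * x + c2))) by (field; lra).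
unfold Rdiv. apply Rmult_le_compat_r; [apply Rlt_le, Rinv_0_lt_compat, hd|nra].
Qed.

Lemma wallis_upper_remainder_le x c1 c2 : 1 <= x -> 0 < c1 -> 0 < c2 < 1 ->
  ln (2 * x + 1) + ln (4 * x + c2) - ln 2 - 2 * ln (2 * x + c1) <= 7/8 / x.
Proof.
intros hx h1 h2.
replace (ln (2 * x + 1) + ln (4 * x + c2) - ln 2 - 2 * ln (2 * x + c1))
  with (ln ((2 * x + 1) * (4 * x + c2)) - ln (2 * (2 * x + c1) ^ 2))
  by (rewrite !ln_mult, ln_pow by (try apply pow_lt; lra); simpl; ring).
assert (hd : 0 < 2 * (2 * x + c1) ^ 2) by nra.
eapply Rle_trans; [apply ln_sub_le; nra|].
set (p := (2 * x + 1) * (4 * x + c2)). set (q := 2 * (2 * x + c1) ^ 2) in *.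
replace ((p - q) / q) with ((p - q) * x / (q * x)) by (field; split; lra).
replace (7/8 / x) with (7/8 * q / (q * x)) by (field; split; lra).
unfold Rdiv. apply Rmult_le_compat_r; [apply Rlt_le, Rinv_0_lt_compat; nra|].
unfold p, q. nra.
Qed.

Lemma err_nu_even_le j : (2 <= j)%nat -> err_nu (2 * j) <= 9/8 / INR j.
Proof.
intros hj. assert (hx : 2 <= INR j) by (apply (le_INR 2) in hj; simpl in hj; lra).
destruct (nu_bounds (2 * j)) as [c1a c1b]; [lia|].
destruct (nu_bounds (2 * (2 * j))) as [c2a c2b]; [lia|].
pose proof (theta_bounds (2 * j) ltac:(lia)). pose proof (theta_bounds (2 * (2 * j)) ltac:(lia)).
pose proof (log_err_even_combination (nu (2 * j)) (nu (2 * (2 * j))) j ltac:(lia) c1a c2a) as E.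
destruct (ln_wallis_ineq j ltac:(lia)) as [W _].
pose proof (wallis_lower_remainder_le (INR j) (nu (2 * j)) (nu (2 * (2 * j)))
  ltac:(lra) ltac:(lra) c2a).
pose proof (err_theta_sub_err_nu (2 * (2 * j)) ltac:(lia)) as g4.
pose proof (err_theta_sub_err_nu (2 * j) ltac:(lia)) as g2.
pose proof (err_theta_decr (2 * j) j ltac:(lia)) as mono.
replace (2 * j + 2 * j)%nat with (2 * (2 * j))%nat in mono by lia.
rewrite mult_INR in g2. replace (INR 2) with 2 in g2 by (simpl; ring).
replace (1 / (2 * INR j)) with (1/2 / INR j) in g2 by (field; lra).
unfold err_nu, err_theta in *. lra.
Qed.

Lemma err_theta_even_ge j : (1 <= j)%nat -> - err_theta (2 * j) <= 15/16 / INR j.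
Proof.
intros hj. assert (hx : 1 <= INR j) by (apply (le_INR 1); lia).
destruct (nu_bounds (2 * j)) as [c1a c1b]; [lia|].
destruct (nu_bounds (2 * (2 * j))) as [c2a c2b]; [lia|].
destruct (theta_bounds (2 * j)) as [t1a t1b]; [lia|].
destruct (theta_bounds (2 * (2 * j))) as [t2a t2b]; [lia|].
pose proof (log_err_even_combination (theta (2 * j)) (theta (2 * (2 * j))) j ltac:(lia)
  ltac:(lra) ltac:(lra)) as E.
destruct (ln_wallis_ineq j hj) as [_ W].
pose proof (wallis_upper_remainder_le (INR j) (theta (2 * j)) (theta (2 * (2 * j))) hx
  ltac:(lra) ltac:(lra)).
pose proof (err_theta_sub_err_nu (2 * (2 * j)) ltac:(lia)) as g4.
pose proof (err_theta_sub_err_nu (2 * j) ltac:(lia)) as g2.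
pose proof (err_nu_incr (2 * j) j ltac:(lia)) as mono.
replace (2 * j + 2 * j)%nat with (2 * (2 * j))%nat in mono by lia.
rewrite mult_INR in g2. replace (INR 2) with 2 in g2 by (simpl; ring).
replace (1 / (2 * INR j)) with (1/2 / INR j) in g2 by (field; lra).
unfold err_nu, err_theta in *. lra.
Qed.

Lemma log_err_odd_sub_even c1 c2 k : (1 <= k)%nat -> 0 < c1 -> 0 < c2 ->
  log_err c2 (2 * k + 1) - log_err c1 (2 * k) =
  ln (factR k) - ln (half_fact (2 * k + 1))
  + (ln (2 * INR k + 1 + c2) - ln (2 * INR k + c1)) / 2 - 1/2
  + (2 * INR k + 1) / 2 * (ln (2 * INR k + 1) - ln (2 * INR k)) + ln (INR k) / 2.
Proof.
intros hk h1 h2. assert (hx : 1 <= INR k) by (apply (le_INR 1); lia). pose proof PI_RGT_0.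
unfold log_err. rewrite half_fact_even, plus_INR, mult_INR.
replace (INR 2) with 2 by (simpl; ring). replace (INR 1) with 1 by reflexivity.
rewrite !ln_mult by lra. field.
Qed.

Lemma log_err_odd_bounds c1 c2 k : (1 <= k)%nat -> 0 < c1 < 1 -> 0 < c2 < 1 ->
  log_err c1 (2 * k) - 1/2 / INR k <= log_err c2 (2 * k + 1) <=
  log_err c1 (2 * k) + 3/4 / INR k.
Proof.
intros hk h1 h2. assert (hx : 1 <= INR k) by (apply (le_INR 1); lia).
pose proof (log_err_odd_sub_even c1 c2 k hk (proj1 h1) (proj1 h2)) as E.
pose proof (ln_half_fact_odd_bounds k) as G.
set (x := INR k) in *.
destruct (ln_succ_sub_bounds (2 * x) ltac:(lra)) as [l1 l2].
destruct (ln_succ_sub_bounds x ltac:(lra)) as [_ l3].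
assert (hl1 : 1/2 <= (2 * x + 1) / 2 * (ln (2 * x + 1) - ln (2 * x))).
{ replace (1/2) with ((2 * x + 1) / 2 * (1 / (2 * x + 1))) at 1 by (field; lra).
  apply Rmult_le_compat_l; lra. }
assert (hl2 : (2 * x + 1) / 2 * (ln (2 * x + 1) - ln (2 * x)) <= 1/2 + 1/4 / x).
{ replace (1/2 + 1/4 / x) with ((2 * x + 1) / 2 * (1 / (2 * x))) by (field; lra).
  apply Rmult_le_compat_l; lra. }
assert (hd1 : 0 <= ln (2 * x + 1 + c2) - ln (2 * x + c1)).
{ pose proof (ln_le (2 * x + c1) (2 * x + 1 + c2) ltac:(lra) ltac:(lra)). lra. }
assert (hd2 : ln (2 * x + 1 + c2) - ln (2 * x + c1) <= 1 / x).
{ eapply Rle_trans; [apply ln_sub_le; lra|].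
  assert (0 < / (2 * x + c1)) by (apply Rinv_0_lt_compat; lra).
  apply Rle_trans with (1 / (2 * x + c1) * 2); [unfold Rdiv; nra|].
  replace (1 / x) with (2 * / (2 * x)) by (field; lra).
  unfold Rdiv. rewrite Rmult_1_l, Rmult_comm.
  apply Rmult_le_compat_l; [lra|]. apply Rinv_le_contravar; lra. }
assert (hc : ln x + ln (x + 1 + /2) <= 2 * ln (x + 1)).
{ rewrite <- ln_mult by lra. replace (2 * ln (x + 1)) with (ln ((x + 1) * (x + 1)))
    by (rewrite ln_mult; lra). apply ln_le; nra. }
replace (1 / x) with (/ x) in l3, hd2 by (field; lra).
replace (1/2 / x) with (1/2 * / x) by (field; lra).
replace (3/4 / x) with (3/4 * / x) by (field; lra).
replace (1/4 / x) with (1/4 * / x) in hl2 by (field; lra).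
split; lra.
Qed.

Lemma strict_incr_eventually_le_inv_neg (b : nat -> R) (j0 J0 : nat) (C : R) :
  (forall j, (j0 <= j)%nat -> b j < b (S j)) ->
  (forall j, (J0 <= j)%nat -> b j <= C / INR j) ->
  forall j, (j0 <= j)%nat -> b j < 0.
Proof.
intros hincr hbound j hj. apply Rnot_le_lt. intros hb.
set (eta := b (S j)). assert (heta : 0 < eta) by (unfold eta; pose proof (hincr j hj); lra).
assert (hge : forall m, eta <= b (S j + m)%nat).
{ induction m as [|m IH]; [rewrite Nat.add_0_r; apply Rle_refl|].
  replace (S j + S m)%nat with (S (S j + m)) by lia.
  pose proof (hincr (S j + m)%nat ltac:(lia)). lra. }
destruct (INR_unbounded (C / eta)) as [N hN].
set (J := (S j + (N + J0))%nat).
assert (hJ : C / eta < INR J) by (unfold J; rewrite !plus_INR; pose proof (pos_INR (S j));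
  pose proof (pos_INR J0); lra).
assert (hJ0 : 0 < INR J) by (apply lt_0_INR; unfold J; lia).
pose proof (hge (N + J0)%nat) as h1. pose proof (hbound J ltac:(unfold J; lia)) as h2.
fold J in h1.
assert (C < eta * INR J).
{ apply (Rmult_lt_reg_r (/ eta)); [apply Rinv_0_lt_compat; lra|].
  replace (eta * INR J * / eta) with (INR J) by (field; lra). exact hJ. }
assert (C / INR J < eta).
{ apply (Rmult_lt_reg_r (INR J)); [lra|]. unfold Rdiv.
  rewrite Rmult_assoc, Rinv_l, Rmult_1_r by lra. lra. }
lra.
Qed.

Lemma err_nu_even_neg j : (1 <= j)%nat -> err_nu (2 * j) < 0.
Proof.
apply (strict_incr_eventually_le_inv_neg (fun j => err_nu (2 * j)) 1 2 (9/8)).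
- intros i hi. replace (2 * S i)%nat with (2 * i + 2)%nat by lia. apply err_nu_lt_add2. lia.
- exact err_nu_even_le.
Qed.

Lemma err_nu_odd_neg k : err_nu (2 * k + 1) < 0.
Proof.
apply (strict_incr_eventually_le_inv_neg (fun k => err_nu (2 * k + 1)) 0 1 (3/4)); [| |lia].
- intros i _. replace (2 * S i + 1)%nat with (2 * i + 1 + 2)%nat by lia.
  apply err_nu_lt_add2. lia.
- intros i hi. cbv beta.
  destruct (nu_bounds (2 * i)), (nu_bounds (2 * i + 1)), (theta_bounds (2 * i)),
    (theta_bounds (2 * i + 1)); try lia.
  destruct (log_err_odd_bounds (nu (2 * i)) (nu (2 * i + 1)) i hi) as [_ h]; try lra.
  pose proof (err_nu_even_neg i hi). unfold err_nu in *. lra.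
Qed.

Lemma err_nu_neg n : (1 <= n)%nat -> err_nu n < 0.
Proof.
intros hn. destruct (Nat.Even_or_Odd n) as [[j ->]|[k ->]].
- apply err_nu_even_neg. lia.
- apply err_nu_odd_neg.
Qed.

Lemma err_theta_even_pos j : (2 <= j)%nat -> 0 < err_theta (2 * j).
Proof.
intros hj. enough (- err_theta (2 * j) < 0) by lra. revert j hj.
apply (strict_incr_eventually_le_inv_neg (fun j => - err_theta (2 * j)) 2 1 (15/16)).
- intros i hi. replace (2 * S i)%nat with (2 * i + 2)%nat by lia.
  pose proof (err_theta_add2_lt (2 * i) ltac:(lia)). lra.
- exact err_theta_even_ge.
Qed.

Lemma err_theta_odd_pos k : (2 <= k)%nat -> 0 < err_theta (2 * k + 1).
Proof.
intros hk. enough (- err_theta (2 * k + 1) < 0) by lra. revert k hk.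
apply (strict_incr_eventually_le_inv_neg (fun k => - err_theta (2 * k + 1)) 2 2 (1/2)).
- intros i hi. replace (2 * S i + 1)%nat with (2 * i + 1 + 2)%nat by lia.
  pose proof (err_theta_add2_lt (2 * i + 1) ltac:(lia)). lra.
- intros i hi. cbv beta.
  destruct (theta_bounds (2 * i)), (theta_bounds (2 * i + 1)); try lia.
  destruct (log_err_odd_bounds (theta (2 * i)) (theta (2 * i + 1)) i) as [h _]; try lia; try lra.
  pose proof (err_theta_even_pos i hi). unfold err_theta in *. lra.
Qed.

Lemma err_theta_pos n : (3 <= n)%nat -> 0 < err_theta n.
Proof.
intros hn. destruct (Nat.Even_or_Odd n) as [[j ->]|[k ->]].
- apply err_theta_even_pos. lia.
- destruct (Nat.eq_dec k 1) as [->|hk].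
  + pose proof err_theta_7_lt_3. pose proof (err_theta_odd_pos 3 ltac:(lia)). simpl in *. lra.
  + apply err_theta_odd_pos. lia.
Qed.

Theorem theorem3 :
  (forall n : nat, (3 <= n)%nat -> vol_bound (theta n) n < Omega n) /\
  (forall n : nat, (1 <= n)%nat -> Omega n < vol_bound (nu n) n).
Proof.
split; intros n hn; assert (hx : 1 <= INR n) by (apply (le_INR 1); lia).
- destruct (theta_bounds n) as [hc _]; [lia|].
  pose proof (ln_Omega_sub_ln_vol_bound (theta n) n ltac:(lia) ltac:(lra)).
  pose proof (err_theta_pos n hn). unfold err_theta in *.
  apply ln_lt_inv; [apply vol_bound_pos; lra|apply Omega_pos|lra].
- destruct (nu_bounds n hn) as [hc _].
  pose proof (ln_Omega_sub_ln_vol_bound (nu n) n hn ltac:(lra)).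
  pose proof (err_nu_neg n hn). unfold err_nu in *.
  apply ln_lt_inv; [apply Omega_pos|apply vol_bound_pos; lra|lra].
Qed.
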